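(* Let $R$ be an associative ring with identity and involution $*$, and let $a\in R^{\#}\cap R^{\dagger}$. Write $x=a(a^{\#})^*a^{\dagger}$ and $b=a^{\dagger}a^2$. Then the following are equivalent: (1) $a\in R^{SEP}$; (2) $x-b$ is a right $(-b)$-idempotent; (3) $x-b$ is a left $(-b)$-idempotent; (4) $b-x$ is a right $(-x)$-idempotent; (5) $b-x$ is a left $(-x)$-idempotent.
   Context: An involution on $R$ is a map $x\mapsto x^*$ with $(x^* )^*=x$, $(x+y)^*=x^*+y^*$, $(xy)^*=y^*x^*$. An element $a$ is Moore–Penrose invertible if there is $b$ with $aba=a$, $bab=b$, $(ab)^*=ab$, $(ba)^*=ba$; such $b$ is unique, denoted $a^{\dagger}$, and $R^{\dagger}$ is the set of such $a$. An element $a$ is group invertible if there is $b$ with $aba=a$, $bab=b$, $ab=ba$; such $b$ is unique, denoted $a^{\#}$, and $R^{\#}$ is the set of such $a$. For $a\in R^{\#}\cap R^{\dagger}$, $a$ is SEP if $a^*=a^{\dagger}=a^{\#}$; $R^{SEP}$ denotes the set of SEP elements. For $e,c\in R$, $e$ is a left $c$-idempotent if $e^2=ce$, and a right $c$-idempotent if $e^2=ec$. *)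

From mathcomp Require Import all_boot all_algebra.
Set Implicit Arguments. Unset Strict Implicit. Unset Printing Implicit Defensive.
Import GRing.Theory.
Local Open Scope ring_scope.

Definition involution (R : pzRingType) (star : R -> R) : Prop :=
  [/\ forall x, star (star x) = x,
      forall x y, star (x + y) = star x + star y &
      forall x y, star (x * y) = star y * star x].

Definition is_MP_inverse (R : pzRingType) (star : R -> R) (a b : R) : Prop :=
  [/\ a * b * a = a, b * a * b = b, star (a * b) = a * b & star (b * a) = b * a].

Definition is_group_inverse (R : pzRingType) (a b : R) : Prop :=
  [/\ a * b * a = a, b * a * b = b & a * b = b * a].

Definition MP_invertible (R : pzRingType) (star : R -> R) (a : R) : Prop :=
  exists b, is_MP_inverse star a b.

Definition group_invertible (R : pzRingType) (a : R) : Prop :=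
  exists b, is_group_inverse a b.

Definition SEP (R : pzRingType) (star : R -> R) (a : R) : Prop :=
  exists ad ag, [/\ is_MP_inverse star a ad, is_group_inverse a ag,
                    star a = ad & ad = ag].

Definition left_c_idempotent (R : pzRingType) (c e : R) : Prop := e * e = c * e.
Definition right_c_idempotent (R : pzRingType) (c e : R) : Prop := e * e = e * c.

(* With x = a (a^#)^* a^+ and b = a^+ a^2, the element a is SEP exactly when
   x = a: then a^2 a^+ = a, hence a a^+ = a a^#, so a a^# is hermitian and a^#
   is a Moore-Penrose inverse of a, i.e. a^# = a^+ (a is EP); for EP elements
   x = a (a^+)^* a^+, and x = a then forces a^* = a^+.  When x = a also b = a,
   so all four c-idempotent conditions hold trivially.  Conversely, the four
   conditions amount to x^2 = bx, x^2 = xb, b^2 = xb and b^2 = bx, and each of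
   them yields x = a, mostly by first making a a^# hermitian; for the two with
   x^2 the cancellations a^* a^+ x = a^+ and x a a^* a^* (a^+)^* = a are the
   key. *)

From mathcomp Require Import all_boot all_algebra.

Set Implicit Arguments. Unset Strict Implicit. Unset Printing Implicit Defensive.
Import GRing.Theory.
Local Open Scope ring_scope.

Lemma right_c_idempotent_subP (R : pzRingType) (c e : R) :
  right_c_idempotent (- c) (e - c) <-> e * e = c * e.
Proof.
have diffE : (e - c) * (e - c) - (e - c) * (- c) = e * e - c * e.
  by rewrite -mulrBr opprK subrK mulrBl.
rewrite /right_c_idempotent; split=> h; apply/eqP; rewrite -subr_eq0.
- by rewrite -diffE h subrr.
- by rewrite diffE h subrr.
Qed.

Lemma left_c_idempotent_subP (R : pzRingType) (c e : R) :
  left_c_idempotent (- c) (e - c) <-> e * e = e * c.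
Proof.
have diffE : (e - c) * (e - c) - (- c) * (e - c) = e * e - e * c.
  by rewrite -mulrBl opprK subrK mulrBr.
rewrite /left_c_idempotent; split=> h; apply/eqP; rewrite -subr_eq0.
- by rewrite -diffE h subrr.
- by rewrite diffE h subrr.
Qed.

Lemma MP_inverse_unique (R : pzRingType) (star : R -> R) (a d d' : R) :
  {morph star : u v / u * v >-> v * u} ->
  is_MP_inverse star a d -> is_MP_inverse star a d' -> d = d'.
Proof.
move=> starM [ada dad adH daH] [ad'a d'ad' ad'H d'aH].
have ad_eq : a * d = a * d'.
  by rewrite -adH -{1}ad'a -!mulrA mulrA starM adH ad'H mulrA ada.
have da_eq : d * a = d' * a.
  by rewrite -daH -{1}ad'a !mulrA -mulrA starM daH d'aH -mulrA (mulrA a) ada.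
by rewrite -dad da_eq -mulrA ad_eq mulrA d'ad'.
Qed.

Lemma group_inverse_unique (R : pzRingType) (a g g' : R) :
  is_group_inverse a g -> is_group_inverse a g' -> g = g'.
Proof.
move=> [aga gag agC] [ag'a g'ag' ag'C].
have ag_eq : a * g = g' * a.
  by rewrite -{1}ag'a ag'C -!mulrA agC (mulrA a) aga.
by rewrite -gag -agC ag_eq -mulrA ag_eq -ag'C mulrA g'ag'.
Qed.

Section SEPCriteria.
Variables (R : pzRingType) (star : R -> R) (a d g : R).
Hypothesis starM : {morph star : u v / u * v >-> v * u}.
Hypotheses (MPd : is_MP_inverse star a d) (GIg : is_group_inverse a g).

Local Notation x := (a * star g * d).
Local Notation b := (d * (a * a)).

Let ada : a * d * a = a. Proof. by case: MPd. Qed.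
Let dad : d * a * d = d. Proof. by case: MPd. Qed.
Let adH : star (a * d) = a * d. Proof. by case: MPd. Qed.
Let daH : star (d * a) = d * a. Proof. by case: MPd. Qed.
Let aga : a * g * a = a. Proof. by case: GIg. Qed.
Let gag : g * a * g = g. Proof. by case: GIg. Qed.
Let agC : a * g = g * a. Proof. by case: GIg. Qed.

Let gaa : g * a * a = a. Proof. by rewrite -agC aga. Qed.
Let aag : a * a * g = a. Proof. by rewrite -mulrA agC mulrA aga. Qed.
Let gga : g * g * a = g. Proof. by rewrite -mulrA -agC mulrA gag. Qed.
Let gda : g * d * a = g.
Proof. by rewrite -{1}gga -!mulrA (mulrA a) ada mulrA gga. Qed.

Let gb : g * b = g * a. Proof. by rewrite !mulrA gda. Qed.
Let bg : b * g = d * a. Proof. by rewrite -mulrA aag. Qed.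
Let bag : b * (a * g) = b. Proof. by rewrite agC mulrA bg -mulrA. Qed.
Let ab : a * b = a * a. Proof. by rewrite !mulrA ada. Qed.
Let agx : a * g * x = x. Proof. by rewrite !mulrA aga. Qed.
Let adx : a * d * x = x. Proof. by rewrite !mulrA ada. Qed.
Let xad : x * a * d = x. Proof. by rewrite -!mulrA (mulrA d) dad. Qed.

Let x_lcancel : star a * d * x = d.
Proof.
have dasg : d * a * star g = star g by rewrite -daH -starM mulrA gda.
have sasgsa : star a * star g * star a = star a by rewrite -!starM mulrA aga.
have sasdd : star a * star d * d = d by rewrite -starM daH dad.
rewrite !mulrA -(mulrA _ d a) -(mulrA _ (d * a)) dasg.
by rewrite -{1}sasdd !mulrA sasgsa sasdd.
Qed.

Let x_rcancel : x * (a * star a * star a * star d) = a.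
Proof.
have dasa : d * a * star a = star a by rewrite -daH -starM mulrA ada.
have sgsasa : star g * star a * star a = star a by rewrite -!starM mulrA aag.
have sasd : star a * star d = d * a by rewrite -starM daH.
have xasa : x * a * star a = a * star g * star a by rewrite -!mulrA (mulrA d) dasa.
by rewrite !mulrA xasa -!(mulrA a) sgsasa sasd mulrA ada.
Qed.

Lemma EP_of_hermitian : star (a * g) = a * g -> g = d.
Proof.
move=> agH; apply: (MP_inverse_unique starM _ MPd).
by split=> //; rewrite -agC.
Qed.

Lemma EP_of_ad_eq_ag : a * d = a * g -> g = d.
Proof. by move=> adg; apply: EP_of_hermitian; rewrite -adg adH. Qed.

Lemma EP_of_range_b : a * g * b = b -> g = d.
Proof.
move=> agb; apply: EP_of_hermitian.
have agda : a * g * (d * a) = a * g by rewrite -!mulrA (mulrA g) gda.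
have -> : a * g = d * a by rewrite -{1}agda -bg mulrA agb.
exact: daH.
Qed.

Lemma b_eq_of_EP : g = d -> b = a.
Proof. by move=> <-; rewrite mulrA gaa. Qed.

Lemma star_eq_of_EP : g = d -> x = a -> star a = d.
Proof.
move=> gd; rewrite gd => xa.
have adC : a * d = d * a by rewrite -gd agC.
have dasd : d * a * star d = star d.
  by rewrite -[in RHS]dad -(mulrA d a d) starM adH adC.
have daE : d * a = star d * d by rewrite -{1}xa !mulrA dasd.
have saad : star a * (a * d) = star a by rewrite -adH -starM ada.
by rewrite -saad adC daE mulrA -starM daH dad.
Qed.

Lemma EP_of_x_eq : x = a -> g = d.
Proof.
move=> xa; have aad : a * a * d = a by rewrite -{1}xa xad.
by apply: EP_of_ad_eq_ag; rewrite -{1}gaa -!mulrA (mulrA a) aad agC.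
Qed.

Lemma b_eq_of_x_eq : x = a -> b = a.
Proof. by move/EP_of_x_eq/b_eq_of_EP. Qed.

Lemma SEP_iff_x_eq : involutive star -> SEP star a <-> x = a.
Proof.
move=> starK; split=> [[d' [g' [MPd' GIg' sad' d'g']]] | xa].
- have dd : d' = d := MP_inverse_unique starM MPd' MPd.
  have gg : g' = g := group_inverse_unique GIg' GIg.
  have sag : star a = g by rewrite sad' d'g' gg.
  by rewrite -sag starK -dd d'g' gg aag.
- have gd := EP_of_x_eq xa.
  exists d, g; split=> //; exact: star_eq_of_EP.
Qed.

Lemma x_eq_of_xx_bx : x * x = b * x -> x = a.
Proof.
move=> E.
have xa_ba : x * a = b * a.
  by rewrite -{2}x_rcancel mulrA E -mulrA x_rcancel.
have agba : a * g * (b * a) = b * a by rewrite -xa_ba mulrA agx.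
have agb : a * g * b = b.
  by rewrite -[in RHS]bag (mulrA b) -agba -(mulrA (a * g)) -(mulrA b) bag.
have gd := EP_of_range_b agb.
by rewrite -xad xa_ba (b_eq_of_EP gd) -gd aag.
Qed.

Lemma x_eq_of_xx_xb : x * x = x * b -> x = a.
Proof.
move=> E.
have dx : d * x = d * b by rewrite -{1}x_lcancel -mulrA E mulrA x_lcancel.
have d_sadb : d = star a * d * b by rewrite -mulrA -dx mulrA x_lcancel.
have dag : d * a * g = d by rewrite {1}d_sadb -mulrA -(mulrA _ b) bag -d_sadb.
have gd : g = d by apply: EP_of_ad_eq_ag; rewrite -dag !mulrA ada.
by rewrite -adx -mulrA dx (b_eq_of_EP gd) mulrA ada.
Qed.

Lemma x_eq_of_bb_xb : b * b = x * b -> x = a.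
Proof.
move=> E.
have bbg : b * b * g = b by rewrite -mulrA bg -!mulrA (mulrA a d a) ada.
have bE : b = x * (d * a) by rewrite -{1}bbg E -mulrA bg.
have gd : g = d by apply: EP_of_range_b; rewrite {1}bE mulrA agx -bE.
have daC : d * a = a * d by rewrite -gd agC.
by rewrite -[in RHS](b_eq_of_EP gd) bE daC mulrA xad.
Qed.

(* x = agx = gax = gbx = gbb = gab = gaa = a *)
Lemma x_eq_of_bb_bx : b * b = b * x -> x = a.
Proof.
by move=> E; rewrite -agx agC -gb -mulrA -E mulrA gb -mulrA ab mulrA gaa.
Qed.

End SEPCriteria.

Theorem theorem3p4 (R : pzRingType) (star : R -> R) (a ad ag : R) :
  involution star ->
  is_MP_inverse star a ad -> is_group_inverse a ag ->
  let x := a * star ag * ad in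
  let b := ad * (a * a) in
  [/\ (SEP star a <-> right_c_idempotent (- b) (x - b)),
      (SEP star a <-> left_c_idempotent (- b) (x - b)),
      (SEP star a <-> right_c_idempotent (- x) (b - x)) &
      (SEP star a <-> left_c_idempotent (- x) (b - x))].
Proof.
move=> [starK _ starM] MPd GIg x b.
have sepE : SEP star a <-> x = a := SEP_iff_x_eq starM MPd GIg starK.
have bE : x = a -> b = a := b_eq_of_x_eq starM MPd GIg.
split; split=> [/sepE xa | ].
- by apply/right_c_idempotent_subP; rewrite (bE xa) xa.
- by move/right_c_idempotent_subP/(x_eq_of_xx_bx starM MPd GIg)/sepE.
- by apply/left_c_idempotent_subP; rewrite (bE xa) xa.
- by move/left_c_idempotent_subP/(x_eq_of_xx_xb starM MPd GIg)/sepE.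
- by apply/right_c_idempotent_subP; rewrite (bE xa) xa.
- by move/right_c_idempotent_subP/(x_eq_of_bb_xb starM MPd GIg)/sepE.
- by apply/left_c_idempotent_subP; rewrite (bE xa) xa.
- by move/left_c_idempotent_subP/(x_eq_of_bb_bx MPd GIg)/sepE.
Qed.
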